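(* Let $s\geq1$ and consider an explicit $s$-stage Runge–Kutta method in Shu–Osher form with coefficients $a_{i,k}\geq 0$, $b_{i,k}\geq 0$ ($1\leq i\leq s$, $0\leq k\leq i-1$), satisfying $\sum_{k=0}^{i-1}a_{i,k}=1$ for each $i$. Apply it to $dy/dt=T^{(1)}_\lambda(\alpha,\Delta t)\lambda y$, i.e. $y^{(0)}=y^n$, $y^{(i)}=\sum_{k=0}^{i-1}\left(a_{i,k}y^{(k)}+\Delta t\, b_{i,k}T^{(1)}_\lambda(\alpha,\Delta t)\lambda y^{(k)}\right)$ for $i=1,\dots,s$, $y^{n+1}=y^{(s)}$, where $T^{(1)}_\lambda(\alpha,\Delta t)=(1-\alpha\Delta t\lambda)^{-1}$ and $\alpha>0$. If $\alpha\geq 0.5\,\max_{i,k}(b_{i,k}/a_{i,k})$, then the integration is unconditionally stable: $|y^{n+1}|\leq|y^n|$ for every $\Delta t>0$, every $\lambda\in\mathbb{C}$ with $\mathrm{Re}(\lambda)\leq0$, and every $y^n\in\mathbb{C}$.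
   Context: In the maximum, the ratio $b_{i,k}/a_{i,k}$ is understood as $0$ when $b_{i,k}=0$ and as $+\infty$ when $a_{i,k}=0<b_{i,k}$. *)

From HB Require Import structures.
From mathcomp Require Import all_boot all_order all_algebra.
From mathcomp Require Import reals constructive_ereal.
From mathcomp.real_closed Require Import complex.
Set Implicit Arguments. Unset Strict Implicit. Unset Printing Implicit Defensive.
Import Order.TTheory GRing.Theory Num.Theory.
Local Open Scope ring_scope.
Local Open Scope complex_scope.

(* Ratio b/a with the paper's convention: 0 if b = 0, +oo if a = 0 < b. *)
Definition so_ratio (R : realType) (a b : R) : \bar R :=
  if b == 0 then 0%E else if a == 0 then +oo%E else (b / a)%:E.

Definition so_max_ratio (R : realType) (s : nat) (a b : nat -> nat -> R) : \bar R :=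
  \big[Order.max/-oo%E]_(1 <= i < s.+1) \big[Order.max/-oo%E]_(0 <= k < i)
     so_ratio (a i k) (b i k).

Definition T1 (R : realType) (alpha dt : R) (lam : R[i]) : R[i] :=
  (1 - alpha%:C * dt%:C * lam)^-1.

Fixpoint so_stages (R : realType) (a b : nat -> nat -> R) (alpha dt : R)
    (lam y0 : R[i]) (n : nat) : seq R[i] :=
  match n with
  | 0 => [:: y0]
  | m.+1 =>
      let st := so_stages a b alpha dt lam y0 m in
      rcons st (\sum_(0 <= k < m.+1)
                  ((a m.+1 k)%:C * nth 0 st k
                   + dt%:C * (b m.+1 k)%:C * T1 alpha dt lam * lam * nth 0 st k))
  end.

Definition so_step (R : realType) (s : nat) (a b : nat -> nat -> R) (alpha dt : R)
    (lam yn : R[i]) : R[i] :=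
  nth 0 (so_stages a b alpha dt lam yn s) s.

From HB Require Import structures.
From mathcomp Require Import all_boot all_order all_algebra.
From mathcomp Require Import reals constructive_ereal.
From mathcomp.real_closed Require Import complex.
From mathcomp Require Import ring lra.
Import Order.TTheory GRing.Theory Num.Theory.
Local Open Scope ring_scope.
Local Open Scope complex_scope.

(** Each stage y^(i) is a combination of the previous stages with coefficients
    a + b z / (1 - alpha z), z = dt lambda.  When Re z <= 0 and b <= 2 a alpha,
    such a coefficient has modulus at most a; since the a's of a stage sum to 1,
    every stage is a sub-convex combination of earlier ones, and by strong
    induction no stage exceeds |y^n| in modulus. *)

Lemma ler_normc (R : rcfType) (v w : R[i]) :
  complex.Re w ^+ 2 + complex.Im w ^+ 2 <= complex.Re v ^+ 2 + complex.Im v ^+ 2 ->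
  `|w| <= `|v|.
Proof. by move=> le_wv; rewrite !normc_def lecR ler_sqrt ?addr_ge0 ?sqr_ge0. Qed.

Lemma norm_stage_factor_le (R : rcfType) (a b alpha : R) (z : R[i]) :
  0 <= a -> 0 <= b -> 0 <= alpha -> b <= 2 * a * alpha -> complex.Re z <= 0 ->
  `|a%:C + b%:C * z / (1 - alpha%:C * z)| <= a%:C.
Proof.
case: z => x y a0 b0 alpha0 b_le /= x_le0.
set u := 1 - _.
have Re_u : complex.Re u = 1 - alpha * x by rewrite /u; simpc.
have Re_u_ge1 : 1 <= complex.Re u by rewrite Re_u; nra.
have u_gt0 : 0 < `|u|.
  by rewrite normr_gt0; apply: contraTneq Re_u_ge1 => -> /=; rewrite ler10.
have -> : a%:C + b%:C * (x +i* y) / u = (a%:C * u + b%:C * (x +i* y)) / u.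
  by field; rewrite -normr_gt0.
rewrite normrM normrV ?unitfE -?normr_gt0 // ler_pdivrMr //.
rewrite -{2}[a%:C]ger0_norm ?ler0c // -normrM; apply: ler_normc.
(* |a u|^2 - |a u + b z|^2 = 2 a b (- Re z) + (2 a alpha - b) b |z|^2 *)
have ab_x : 0 <= a * b * - x by rewrite mulr_ge0 ?mulr_ge0 ?oppr_ge0.
have slack : 0 <= (2 * a * alpha - b) * b * (x ^+ 2 + y ^+ 2).
  by rewrite mulr_ge0 ?addr_ge0 ?sqr_ge0 // mulr_ge0 // subr_ge0.
by rewrite /u; simpc => /=; nra.
Qed.

Lemma so_ratio_le_max (R : realType) (s : nat) (a b : nat -> nat -> R) i k :
  (1 <= i <= s)%N -> (k < i)%N ->
  (so_ratio (a i k) (b i k) <= so_max_ratio s a b)%E.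
Proof.
move=> /andP[i_ge1 i_le_s] k_lt_i.
set row := fun j => \big[Order.max/-oo%E]_(0 <= l < j) so_ratio (a j l) (b j l).
have le_row : (so_ratio (a i k) (b i k) <= row i)%E.
  apply: (le_bigmax_seq _ k xpredT (fun l => so_ratio (a i l) (b i l))) => //.
  by rewrite mem_index_iota.
apply: le_trans le_row (le_bigmax_seq _ i xpredT row _ _) => //.
by rewrite mem_index_iota i_ge1 ltnS.
Qed.

Lemma so_ratio_half_le (R : realType) (a b alpha : R) :
  0 <= a -> 0 <= b -> 0 <= alpha ->
  ((2^-1 : R)%:E * so_ratio a b <= alpha%:E)%E -> b <= 2 * a * alpha.
Proof.
move=> a0 b0 alpha0; rewrite /so_ratio.
have [-> _|b_neq0] := eqP; first by rewrite !mulr_ge0.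
have [-> |a_neq0] := eqP; first by rewrite gt0_muley ?lte_fin ?invr_gt0 ?ltr0n.
have a_gt0 : 0 < a by rewrite lt_def a0 andbT; apply/eqP.
rewrite -EFinM lee_fin => half_ratio_le.
have : b / a <= 2 * alpha by lra.
by rewrite ler_pdivrMr //; lra.
Qed.

Lemma norm_sum_convex_le (C : numDomainType) (n : nat) (c p w : nat -> C) (M : C) :
  (forall k, (k < n)%N -> `|c k| <= p k) ->
  (forall k, (k < n)%N -> `|w k| <= M) ->
  \sum_(0 <= k < n) p k = 1 ->
  `|\sum_(0 <= k < n) c k * w k| <= M.
Proof.
move=> c_le w_le p_sum1.
apply: le_trans (ler_norm_sum _ _ _) _.
rewrite -[leRHS]mul1r -p_sum1 mulr_suml.
apply: ler_sum_nat => k /= k_lt_n; rewrite normrM.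
by apply: ler_pM; rewrite ?normr_ge0 ?c_le ?w_le.
Qed.

Section Stages.
Variables (R : realType) (a b : nat -> nat -> R) (alpha dt : R) (lam y0 : R[i]).

Let stages := so_stages a b alpha dt lam y0.
Let stage k := nth 0 (stages k) k.
Let coef i k := (a i k)%:C + dt%:C * (b i k)%:C * T1 alpha dt lam * lam.

Lemma size_so_stages m : size (stages m) = m.+1.
Proof. by elim: m => //= m IH; rewrite size_rcons IH. Qed.

Lemma nth_so_stages m k : (k <= m)%N -> nth 0 (stages m) k = stage k.
Proof.
elim: m => [|m IH]; first by rewrite leqn0 => /eqP ->.
rewrite leq_eqVlt => /predU1P[-> //|k_le_m].
by rewrite /= nth_rcons size_so_stages k_le_m IH.
Qed.

Lemma so_stage_succ m : stage m.+1 = \sum_(0 <= k < m.+1) coef m.+1 k * stage k.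
Proof.
rewrite /stage /= nth_rcons size_so_stages ltnn eqxx.
by apply: eq_big_nat => k /andP[_ k_lt]; rewrite nth_so_stages // mulrDl.
Qed.

Lemma norm_so_stage_le s :
  (forall i k, (1 <= i <= s)%N -> (k < i)%N -> `|coef i k| <= (a i k)%:C) ->
  (forall i, (1 <= i <= s)%N -> \sum_(0 <= k < i) a i k = 1) ->
  forall m, (m <= s)%N -> `|stage m| <= `|y0|.
Proof.
move=> coef_le a_sum1; elim/ltn_ind => -[_ _|m IH m_lt_s]; first by [].
rewrite so_stage_succ; apply: norm_sum_convex_le => [k k_le|k k_le|].
- exact: coef_le.
- by apply: IH => //; apply: leq_trans (ltnW m_lt_s).
- by rewrite -rmorph_sum a_sum1.
Qed.

End Stages.

Theorem theorem2 (R : realType) (s : nat) (a b : nat -> nat -> R) (alpha : R) :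
  (1 <= s)%N ->
  (forall i k, (1 <= i <= s)%N -> (k < i)%N -> 0 <= a i k) ->
  (forall i k, (1 <= i <= s)%N -> (k < i)%N -> 0 <= b i k) ->
  (forall i, (1 <= i <= s)%N -> \sum_(0 <= k < i) a i k = 1) ->
  0 < alpha ->
  ((2^-1 : R)%:E * so_max_ratio s a b <= alpha%:E)%E ->
  forall (dt : R) (lam yn : R[i]),
    0 < dt -> complex.Re lam <= 0 ->
    `|so_step s a b alpha dt lam yn| <= `|yn|.
Proof.
move=> _ a_ge0 b_ge0 a_sum1 alpha_gt0 max_le dt lam yn dt_gt0 Re_lam_le0.
apply: norm_so_stage_le a_sum1 _ (leqnn s) => i k i_in k_lt_i.
have -> : dt%:C * (b i k)%:C * T1 alpha dt lam * lam
        = (b i k)%:C * (dt%:C * lam) / (1 - alpha%:C * (dt%:C * lam)).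
  by rewrite /T1 !mulrA; ring.
have alpha_ge0 := ltW alpha_gt0.
apply: norm_stage_factor_le; rewrite ?a_ge0 ?b_ge0 //.
- apply: so_ratio_half_le; rewrite ?a_ge0 ?b_ge0 //.
  apply: le_trans max_le; apply: lee_wpmul2l; first by rewrite lee_fin invr_ge0 ler0n.
  exact: so_ratio_le_max.
- by case: lam Re_lam_le0 => x y /= x_le0; simpc; rewrite pmulr_rle0.
Qed.
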